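(* Let $\mathbf{u}=(u_n)$ be an a-sequence whose sequence of ratios $(q_n)$ is unbounded. Then $s_\mathbf{u}(\mathbb{T})=\{x\in\mathbb{T}: u_nx\to0\text{ in }\mathbb{T}\}$ is not an $F_\sigma$-subset of $\mathbb{T}$.
   Context: An a-sequence is a strictly increasing sequence of integers $\mathbf{u}=(u_n)_{n\in\mathbb{N}}$ with $u_n\mid u_{n+1}$ for all $n$; its ratios are $q_0=u_0$ and $q_n=u_n/u_{n-1}$ for $n>0$. $\mathbb{T}=\mathbb{R}/\mathbb{Z}$ with its usual compact topology. *)

From Stdlib Require Import Reals Lra Lia Arith.
Open Scope R_scope.

Definition a_sequence (u : nat -> nat) : Prop :=
  (forall n, (u n < u (S n))%nat) /\ (forall n, Nat.divide (u n) (u (S n))).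

Definition ratio (u : nat -> nat) (n : nat) : nat :=
  match n with
  | O => u O
  | S m => (u (S m) / u m)%nat
  end.

(* The circle group T = R/Z, represented by the fundamental domain [0,1). *)
Definition Tpt := { x : R | 0 <= x < 1 }.

(* fractional part t - floor t, in [0,1) *)
Definition frac (t : R) : R := t - (IZR (up t) - 1).

(* distance to the nearest integer: the norm of t mod Z in T *)
Definition tnorm (t : R) : R := Rmin (frac t) (1 - frac t).

Definition Tdist (x y : Tpt) : R := tnorm (proj1_sig x - proj1_sig y).

(* closed subsets of T (T is the metric space with the quotient metric,
   which induces its usual compact topology) *)
Definition T_closed (A : Tpt -> Prop) : Prop :=
  forall x : Tpt,
    (forall eps, 0 < eps -> exists y : Tpt, A y /\ Tdist x y < eps) -> A x.

Definition T_Fsigma (A : Tpt -> Prop) : Prop :=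
  exists F : nat -> (Tpt -> Prop),
    (forall k, T_closed (F k)) /\
    (forall x, A x <-> exists k, F k x).

Definition s_u (u : nat -> nat) (x : Tpt) : Prop :=
  forall eps, 0 < eps -> exists N, forall n, (N <= n)%nat ->
    tnorm (INR (u n) * proj1_sig x) < eps.

From Stdlib Require Import Reals Lra Lia ClassicalEpsilon Classical ZArith Arith.
Open Scope R_scope.

(* Choose positions p_0 < p_1 < ... at which the ratio q_(p_i + 1) is at least
   8(i+1), and code g : nat -> nat by x(g) = sum_i d_i / u_(p_i + 1) with digits
   d_i ~ q_(p_i + 1) / (4 (min(g_i, i) + 1)). As u_(p_j + 1) divides u_n for n > p_j
   and the u_(p_i) at least double, the distance of u_n x(g) to Z is at most
   twice the largest digit ratio d_j / q_(p_j + 1) with p_j >= n, and at n = p_i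
   it is at least d_i / q_(p_i + 1). Hence x(g) is in s_u exactly when g tends to
   infinity, and x is continuous on Baire space. An F_sigma decomposition of s_u
   would thus pull back to one of the set of sequences tending to infinity, which
   a diagonal argument rules out. *)

Section ASequence.
Variable u : nat -> nat.
Hypothesis Ha : a_sequence u.

Lemma a_sequence_pos n : (1 <= u n)%nat.
Proof.
  destruct Ha as [Hlt Hdvd]. induction n as [|n IH].
  - destruct (Hdvd 0%nat) as [c Hc]. specialize (Hlt 0%nat). nia.
  - specialize (Hlt n). lia.
Qed.

Lemma a_sequence_le m n : (m <= n)%nat -> (u m <= u n)%nat.
Proof. destruct Ha as [Hlt _]. induction 1 as [|n _ IH]; [lia|]. specialize (Hlt n). lia. Qed.

Lemma a_sequence_gt_index n : (n < u n)%nat.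
Proof.
  induction n as [|n IH]; [apply a_sequence_pos|].
  destruct Ha as [Hlt _]. specialize (Hlt n). lia.
Qed.

Lemma a_sequence_divide m n : (m <= n)%nat -> Nat.divide (u m) (u n).
Proof.
  destruct Ha as [_ Hdvd]. induction 1 as [|n _ IH]; [apply Nat.divide_refl|].
  eapply Nat.divide_trans; eauto.
Qed.

Lemma a_sequence_ratio n : u (S n) = (ratio u (S n) * u n)%nat.
Proof.
  pose proof (a_sequence_pos n). destruct Ha as [_ Hdvd].
  destruct (Hdvd n) as [c Hc]. simpl. rewrite Hc, Nat.div_mul; lia.
Qed.

Lemma a_sequence_double n : (2 * u n <= u (S n))%nat.
Proof.
  pose proof (a_sequence_pos n). pose proof (a_sequence_ratio n).
  destruct Ha as [Hlt _]. specialize (Hlt n).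
  destruct (ratio u (S n)) as [|[|q]]; nia.
Qed.

Lemma ratio_le_a_sequence n L : (n <= L)%nat -> (ratio u n <= u L)%nat.
Proof.
  intros HnL. destruct n as [|n]; [apply a_sequence_le; lia|].
  pose proof (a_sequence_ratio n). pose proof (a_sequence_pos n).
  pose proof (a_sequence_le (S n) L HnL). nia.
Qed.

Lemma large_ratio_beyond :
  (forall M : nat, exists n : nat, (M < ratio u n)%nat) ->
  forall L K, exists p, (L <= p)%nat /\ (K <= ratio u (S p))%nat.
Proof.
  intros Hunb L K. destruct (Hunb (u L + K)%nat) as [n Hn].
  destruct (Nat.le_gt_cases n L) as [HnL|HLn].
  - pose proof (ratio_le_a_sequence n L HnL). lia.
  - destruct n as [|p]; [lia|]. exists p. split; lia.
Qed.

End ASequence.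

Lemma tnorm_add_IZR z t : tnorm (IZR z + t) = tnorm t.
Proof.
  unfold tnorm, frac. destruct (archimed t) as [H1 H2].
  assert (E : up (IZR z + t) = (z + up t)%Z).
  { symmetry. apply tech_up; rewrite plus_IZR; lra. }
  rewrite E, plus_IZR.
  replace (IZR z + t - (IZR z + IZR (up t) - 1)) with (t - (IZR (up t) - 1)) by ring.
  reflexivity.
Qed.

Lemma tnorm_le_Rabs t : tnorm t <= Rabs t.
Proof.
  unfold tnorm, frac. destruct (archimed t) as [H1 H2].
  destruct (Z_le_gt_dec (up t) 0) as [H|H].
  - apply IZR_le in H. eapply Rle_trans; [apply Rmin_r|].
    unfold Rabs; destruct (Rcase_abs t); lra.
  - assert (H' : (1 <= up t)%Z) by lia. apply IZR_le in H'.
    eapply Rle_trans; [apply Rmin_l|].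
    unfold Rabs; destruct (Rcase_abs t); lra.
Qed.

Lemma tnorm_id t : 0 <= t <= 1/2 -> tnorm t = t.
Proof.
  intros Ht. unfold tnorm, frac.
  assert (E : up t = 1%Z) by (symmetry; apply tech_up; simpl; lra).
  rewrite E. simpl. rewrite Rmin_left; lra.
Qed.

(** * Sequences tending to infinity do not form an F_sigma in Baire space *)

Definition agree_upto (J : nat) (f g : nat -> nat) : Prop :=
  forall i, (i < J)%nat -> f i = g i.

Definition diverges (g : nat -> nat) : Prop :=
  forall M, exists N, forall i, (N <= i)%nat -> (M <= g i)%nat.

Definition baire_closed (X : (nat -> nat) -> Prop) : Prop :=
  forall f, ~ X f -> exists J, forall g, agree_upto J f g -> ~ X g.

Lemma agree_upto_le J J' f g : (J <= J')%nat -> agree_upto J' f g -> agree_upto J f g.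
Proof. intros HJ H i Hi. apply H. lia. Qed.

Section DivergentNotFsigma.
Variable X : nat -> (nat -> nat) -> Prop.
Hypothesis X_closed : forall k, baire_closed (X k).
Hypothesis X_diverges : forall k g, X k g -> diverges g.

Definition splice (c : nat) (f : nat -> nat) (m : nat) : nat -> nat :=
  fun i => if Nat.ltb i c then f i else m.

Definition escape (k c : nat) (f : nat -> nat) : nat :=
  epsilon (inhabits 0%nat)
    (fun J => (c < J)%nat /\ forall g, agree_upto J f g -> ~ X k g).

(* Stage [k] is a cut [c] with a sequence equal to [k] from [c] on; being bounded
   it lies outside [X k], hence so does a basic neighbourhood of it, and stage
   [k+1] keeps the sequence up to the end of that neighbourhood, then takes the
   value [k+1]. *)
Fixpoint stage (k : nat) : nat * (nat -> nat) :=
  match k with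
  | O => (0%nat, fun _ => 0%nat)
  | S k' =>
      let c := escape k' (fst (stage k')) (snd (stage k')) in
      (c, splice c (snd (stage k')) k)
  end.

Definition cut (k : nat) : nat := fst (stage k).
Definition approx (k : nat) : nat -> nat := snd (stage k).

Lemma approx_S k i :
  approx (S k) i = if Nat.ltb i (cut (S k)) then approx k i else S k.
Proof. reflexivity. Qed.

Lemma approx_tail k i : (cut k <= i)%nat -> approx k i = k.
Proof.
  destruct k as [|k]; intros Hi; [reflexivity|].
  rewrite approx_S. destruct (Nat.ltb_spec i (cut (S k))); [lia|reflexivity].
Qed.

Lemma approx_not_X k : ~ X k (approx k).
Proof.
  intros HX. destruct (X_diverges k _ HX (S k)) as [N HN].
  specialize (HN (Nat.max N (cut k)) ltac:(lia)).
  rewrite approx_tail in HN; lia.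
Qed.

Lemma escape_spec k c f : ~ X k f ->
  (c < escape k c f)%nat /\ forall g, agree_upto (escape k c f) f g -> ~ X k g.
Proof.
  intros Hf. unfold escape. apply epsilon_spec.
  destruct (X_closed k f Hf) as [J HJ]. exists (Nat.max (S c) J). split; [lia|].
  intros g Hg. apply HJ. eapply agree_upto_le; [|exact Hg]. lia.
Qed.

Lemma cut_step k :
  (cut k < cut (S k))%nat /\ forall g, agree_upto (cut (S k)) (approx k) g -> ~ X k g.
Proof. apply escape_spec, approx_not_X. Qed.

Lemma cut_ge_index k : (k <= cut k)%nat.
Proof. induction k as [|k IH]; [apply le_0_n|]. pose proof (proj1 (cut_step k)). lia. Qed.

Lemma cut_le a b : (a <= b)%nat -> (cut a <= cut b)%nat.
Proof. induction 1 as [|b _ IH]; [lia|]. pose proof (proj1 (cut_step b)). lia. Qed.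

Lemma approx_stable a b i : (i < cut a)%nat -> (a <= b)%nat -> approx b i = approx a i.
Proof.
  intros Hi. induction 1 as [|b Hab IH]; [reflexivity|].
  rewrite approx_S. pose proof (cut_le a (S b) ltac:(lia)).
  destruct (Nat.ltb_spec i (cut (S b))); [exact IH|lia].
Qed.

Lemma approx_ge k' k i : (k' <= k)%nat -> (cut k' <= i)%nat -> (k' <= approx k i)%nat.
Proof.
  induction k as [|k IH]; intros Hk Hi; [lia|].
  rewrite approx_S. destruct (Nat.ltb_spec i (cut (S k))) as [Hlt|]; [|lia].
  destruct (Nat.eq_dec k' (S k)) as [->|]; [lia|]. apply IH; lia.
Qed.

Definition limit (i : nat) : nat := approx (S i) i.

Lemma limit_eq m i : (i < cut m)%nat -> limit i = approx m i.
Proof.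
  intros Hi. unfold limit. pose proof (cut_ge_index (S i)).
  destruct (Nat.le_ge_cases (S i) m).
  - symmetry. apply approx_stable; lia.
  - apply approx_stable; lia.
Qed.

Lemma limit_diverges : diverges limit.
Proof.
  intros M. exists (cut M). intros i Hi. unfold limit.
  pose proof (cut_ge_index M). apply approx_ge; lia.
Qed.

Lemma limit_not_X k : ~ X k limit.
Proof.
  apply (proj2 (cut_step k)). intros i Hi.
  rewrite (limit_eq (S k) i Hi), approx_S.
  destruct (Nat.ltb_spec i (cut (S k))); [reflexivity|lia].
Qed.

Theorem divergent_not_Fsigma : exists g, diverges g /\ forall k, ~ X k g.
Proof. exists limit. split; [apply limit_diverges|apply limit_not_X]. Qed.

End DivergentNotFsigma.

(** * Lacunary series *)

Section Lacunary.
Variables U r : nat -> R.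
Hypothesis U_ge_1 : forall i, 1 <= U i.
Hypothesis U_double : forall i, 2 * U i <= U (S i).
Hypothesis r_range : forall i, 0 <= r i <= 1/4.

Fixpoint psum (n : nat) : R :=
  match n with O => 0 | S n => psum n + r n / U n end.

Lemma term_nonneg i : 0 <= r i / U i.
Proof.
  pose proof (r_range i). pose proof (U_ge_1 i).
  apply Rmult_le_pos; [lra|]. left. apply Rinv_0_lt_compat. lra.
Qed.

Lemma psum_le m n : (m <= n)%nat -> psum m <= psum n.
Proof. induction 1 as [|n _ IH]; simpl; [lra|]. pose proof (term_nonneg n). lra. Qed.

Lemma psum_tail_le delta i d : (forall j, (i <= j)%nat -> r j <= delta) ->
  U i * (psum (i + d) - psum i) <= 2 * delta.
Proof.
  revert i. induction d as [|d IH]; intros i Hr.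
  - rewrite Nat.add_0_r. pose proof (r_range i). specialize (Hr i (le_n i)). nra.
  - replace (i + S d)%nat with (S i + d)%nat by lia.
    specialize (IH (S i) ltac:(intros j Hj; apply Hr; lia)).
    pose proof (psum_le (S i) (S i + d) ltac:(lia)).
    pose proof (U_double i). pose proof (U_ge_1 i). specialize (Hr i (le_n i)).
    replace (U i * (psum (S i + d) - psum i))
      with (U i * (psum (S i + d) - psum (S i)) + r i)
      by (change (psum (S i)) with (psum i + r i / U i); field; lra).
    assert (0 <= (U (S i) - 2 * U i) * (psum (S i + d) - psum (S i))) by (apply Rmult_le_pos; lra).
    nra.
Qed.

Lemma psum_le_half n : psum n <= 1/2.
Proof.
  pose proof (psum_tail_le (1/4) 0 n (fun j _ => proj2 (r_range j))) as H.
  simpl in H. pose proof (U_ge_1 0). pose proof (psum_le 0 n ltac:(lia)). simpl in *.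
  rewrite Rminus_0_r in H. nra.
Qed.

Definition psum_values (y : R) : Prop := exists n, y = psum n.

Lemma psum_values_bound : bound psum_values.
Proof. exists (1/2). intros y [n ->]. apply psum_le_half. Qed.

Lemma psum_values_inhabited : exists y, psum_values y.
Proof. exists 0. now exists 0%nat. Qed.

Definition lacunary_sum : R :=
  proj1_sig (completeness psum_values psum_values_bound psum_values_inhabited).

Lemma lacunary_sum_lub : is_lub psum_values lacunary_sum.
Proof. unfold lacunary_sum. apply proj2_sig. Qed.

Lemma psum_le_lacunary_sum n : psum n <= lacunary_sum.
Proof. apply lacunary_sum_lub. now exists n. Qed.

Lemma lacunary_sum_le B : (forall n, psum n <= B) -> lacunary_sum <= B.
Proof. intros HB. apply lacunary_sum_lub. intros y [n ->]. apply HB. Qed.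

Lemma lacunary_tail_le delta i : (forall j, (i <= j)%nat -> r j <= delta) ->
  U i * (lacunary_sum - psum i) <= 2 * delta.
Proof.
  intros Hr. pose proof (U_ge_1 i).
  cut (lacunary_sum <= psum i + 2 * delta / U i).
  { intros Hsum. apply (Rmult_le_compat_l (U i)) in Hsum; [|lra].
    replace (U i * (psum i + 2 * delta / U i)) with (U i * psum i + 2 * delta) in Hsum
      by (field; lra). lra. }
  apply lacunary_sum_le. intros n. destruct (Nat.le_gt_cases i n) as [Hin|Hni].
  - pose proof (psum_tail_le delta i (n - i) Hr) as Htail.
    replace (i + (n - i))%nat with n in Htail by lia.
    apply (Rmult_le_reg_l (U i)); [lra|].
    replace (U i * (psum i + 2 * delta / U i)) with (U i * psum i + 2 * delta) by (field; lra).
    lra.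
  - pose proof (psum_le n i ltac:(lia)). pose proof (r_range i). specialize (Hr i (le_n i)).
    assert (0 <= 2 * delta / U i) by (apply Rmult_le_pos; [lra|left; apply Rinv_0_lt_compat; lra]).
    lra.
Qed.

Lemma lacunary_tail_ge i : r i <= U i * (lacunary_sum - psum i).
Proof.
  pose proof (psum_le_lacunary_sum (S i)). simpl in *. pose proof (U_ge_1 i).
  replace (r i) with (U i * (r i / U i)) by (field; lra).
  apply Rmult_le_compat_l; lra.
Qed.

End Lacunary.

(** * Coding Baire space into the circle *)

Lemma nat_div_ratio_bounds (q K : nat) : (0 < K)%nat -> (2 * K <= q)%nat ->
  / (2 * INR K) <= INR (q / K) / INR q <= / INR K.
Proof.
  intros HK HKq.
  assert (Hlow : (K * (q / K) <= q)%nat) by apply Nat.Div0.mul_div_le.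
  assert (Hhigh : (q <= 2 * K * (q / K))%nat).
  { pose proof (Nat.div_mod q K ltac:(lia)). pose proof (Nat.mod_upper_bound q K ltac:(lia)).
    assert (1 <= q / K)%nat by (apply Nat.div_le_lower_bound; lia). nia. }
  apply le_INR in Hlow, Hhigh. rewrite !mult_INR in Hlow, Hhigh. rewrite mult_INR in Hhigh. change (INR 2) with 2 in Hhigh.
  assert (0 < INR K) by (apply lt_0_INR; lia).
  assert (0 < INR q) by (apply lt_0_INR; lia).
  split.
  - apply (Rmult_le_reg_r (2 * INR K * INR q)); [nra|].
    replace (/ (2 * INR K) * (2 * INR K * INR q)) with (INR q) by (field; lra).
    replace (INR (q / K) / INR q * (2 * INR K * INR q)) with (2 * INR K * INR (q / K))
      by (field; lra). lra.
  - apply (Rmult_le_reg_r (INR K * INR q)); [nra|].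
    replace (/ INR K * (INR K * INR q)) with (INR q) by (field; lra).
    replace (INR (q / K) / INR q * (INR K * INR q)) with (INR K * INR (q / K))
      by (field; lra). lra.
Qed.

Lemma preimage_baire_closed (phi : (nat -> nat) -> Tpt) (A : Tpt -> Prop) :
  (forall eps, 0 < eps -> exists J, forall f g, agree_upto J f g -> Tdist (phi f) (phi g) < eps) ->
  T_closed A -> baire_closed (fun g => A (phi g)).
Proof.
  intros Hphi HA f Hf.
  assert (Hsep : exists eps, 0 < eps /\ forall y, A y -> eps <= Tdist (phi f) y).
  { apply NNPP. intros Hno. apply Hf, HA. intros eps Heps. apply NNPP. intros Hfar.
    apply Hno. exists eps. split; [exact Heps|]. intros y Hy.
    apply Rnot_lt_le. intros Hlt. apply Hfar. now exists y. }
  destruct Hsep as [eps [Heps Hsep]]. destruct (Hphi eps Heps) as [J HJ].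
  exists J. intros g Hfg HAg. specialize (HJ f g Hfg). specialize (Hsep _ HAg). lra.
Qed.

Section Coding.
Variable u : nat -> nat.
Hypothesis Ha : a_sequence u.
Hypothesis Hunb : forall M : nat, exists n : nat, (M < ratio u n)%nat.

Definition beyond (L K : nat) : nat :=
  epsilon (inhabits 0%nat) (fun p => (L <= p)%nat /\ (K <= ratio u (S p))%nat).

Lemma beyond_spec L K : (L <= beyond L K)%nat /\ (K <= ratio u (S (beyond L K)))%nat.
Proof. unfold beyond. apply epsilon_spec, large_ratio_beyond; assumption. Qed.

Fixpoint pos (i : nat) : nat :=
  beyond (match i with O => O | S j => S (pos j) end) (8 * S i).

Lemma pos_lt_S i : (pos i < pos (S i))%nat.
Proof. apply (beyond_spec (S (pos i))). Qed.

Lemma pos_le i j : (i <= j)%nat -> (pos i <= pos j)%nat.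
Proof. induction 1 as [|j _ IH]; [lia|]. pose proof (pos_lt_S j). lia. Qed.

Lemma pos_ge_index i : (i <= pos i)%nat.
Proof. induction i as [|i IH]; [lia|]. pose proof (pos_lt_S i). lia. Qed.

Lemma ratio_at_pos i : (8 * S i <= ratio u (S (pos i)))%nat.
Proof. destruct i; apply beyond_spec. Qed.

Lemma pos_bracket n :
  exists i, (forall j, (j < i)%nat -> (S (pos j) <= n)%nat) /\ (n <= pos i)%nat.
Proof.
  induction n as [|n [i [Hbelow Hn]]].
  - exists 0%nat. split; [lia|apply le_0_n].
  - destruct (Nat.le_gt_cases (S n) (pos i)).
    + exists i. split; [|assumption]. intros j Hj. specialize (Hbelow j Hj). lia.
    + exists (S i). pose proof (pos_lt_S i). split; [|lia].
      intros j Hj. pose proof (pos_le j i ltac:(lia)). lia.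
Qed.

Definition scale (i : nat) : R := INR (u (pos i)).

Lemma scale_ge_1 i : 1 <= scale i.
Proof. apply (le_INR 1), a_sequence_pos, Ha. Qed.

Lemma scale_double i : 2 * scale i <= scale (S i).
Proof.
  unfold scale. pose proof (a_sequence_double u Ha (pos i)).
  pose proof (a_sequence_le u Ha (S (pos i)) (pos (S i)) (pos_lt_S i)).
  replace 2 with (INR 2) by reflexivity. rewrite <- mult_INR. apply le_INR. lia.
Qed.

(* Capping [g i] by [i] keeps the digit below the ratio available at [pos i],
   without changing whether [g] diverges. *)
Definition level (g : nat -> nat) (i : nat) : nat := Nat.min (g i) i.

Definition digit (g : nat -> nat) (i : nat) : nat :=
  ratio u (S (pos i)) / (4 * S (level g i)).

Definition coef (g : nat -> nat) (i : nat) : R :=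
  INR (digit g i) / INR (ratio u (S (pos i))).

Lemma coef_bounds g i :
  / (8 * (INR (level g i) + 1)) <= coef g i <= / (4 * (INR (level g i) + 1)).
Proof.
  pose proof (ratio_at_pos i).
  assert (Hlev : (level g i <= i)%nat) by apply Nat.le_min_r.
  destruct (nat_div_ratio_bounds (ratio u (S (pos i))) (4 * S (level g i))) as [Hl Hh];
    [lia|lia|].
  assert (HK : INR (4 * S (level g i)) = 4 * (INR (level g i) + 1)).
  { rewrite mult_INR, (S_INR (level g i)). replace (INR 4) with 4 by (simpl; lra). reflexivity. }
  rewrite HK in Hl, Hh. unfold coef, digit.
  split; [|exact Hh]. replace (8 * (INR (level g i) + 1)) with (2 * (4 * (INR (level g i) + 1)))
    by ring. exact Hl.
Qed.

Lemma coef_le_of_level g i k : (k <= level g i)%nat -> coef g i <= / (4 * (INR k + 1)).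
Proof.
  intros Hk. eapply Rle_trans; [apply coef_bounds|]. apply le_INR in Hk.
  pose proof (pos_INR k). apply Rinv_le_contravar; lra.
Qed.

Lemma coef_range g i : 0 <= coef g i <= 1/4.
Proof.
  split.
  - eapply Rle_trans; [|apply coef_bounds].
    left. apply Rinv_0_lt_compat. pose proof (pos_INR (level g i)). lra.
  - eapply Rle_trans; [apply (coef_le_of_level g i 0); lia|]. simpl. lra.
Qed.

Definition code (g : nat -> nat) : R :=
  lacunary_sum scale (coef g) scale_ge_1 scale_double (coef_range g).

Notation psum_of g := (psum scale (coef g)).

Lemma coef_div_scale g i : coef g i / scale i = INR (digit g i) / INR (u (S (pos i))).
Proof.
  unfold coef, scale. rewrite (a_sequence_ratio u Ha (pos i)), mult_INR.
  pose proof (ratio_at_pos i). pose proof (a_sequence_pos u Ha (pos i)).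
  assert (0 < INR (ratio u (S (pos i)))) by (apply lt_0_INR; lia).
  assert (0 < INR (u (pos i))) by (apply lt_0_INR; lia).
  field. lra.
Qed.

Lemma psum_times_integer g n i : (forall j, (j < i)%nat -> (S (pos j) <= n)%nat) ->
  exists z, INR (u n) * psum_of g i = IZR z.
Proof.
  induction i as [|i IH]; intros Hbelow.
  - exists 0%Z. simpl. ring.
  - destruct IH as [z Hz]; [intros j Hj; apply Hbelow; lia|].
    destruct (a_sequence_divide u Ha (S (pos i)) n (Hbelow i ltac:(lia))) as [c Hc].
    exists (z + Z.of_nat (digit g i * c))%Z.
    rewrite plus_IZR, <- INR_IZR_INZ, <- Hz. simpl psum.
    rewrite coef_div_scale, Hc, !mult_INR.
    pose proof (a_sequence_pos u Ha (S (pos i))).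
    assert (0 < INR (u (S (pos i)))) by (apply lt_0_INR; lia).
    field. lra.
Qed.

Lemma code_range g : 0 <= code g < 1.
Proof.
  pose proof (psum_le_lacunary_sum scale (coef g) scale_ge_1 scale_double (coef_range g) 0).
  pose proof (lacunary_sum_le scale (coef g) scale_ge_1 scale_double (coef_range g) (1/2)
    (psum_le_half scale (coef g) scale_ge_1 scale_double (coef_range g))).
  unfold code. simpl in *. lra.
Qed.

Definition codeT (g : nat -> nat) : Tpt := exist _ (code g) (code_range g).

Lemma code_tail_le g i delta : (forall j, (i <= j)%nat -> coef g j <= delta) ->
  scale i * (code g - psum_of g i) <= 2 * delta.
Proof. apply lacunary_tail_le. Qed.

Lemma code_tail_ge g i : coef g i <= scale i * (code g - psum_of g i).
Proof. apply lacunary_tail_ge. Qed.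

Lemma code_ge_psum g i : psum_of g i <= code g.
Proof. apply psum_le_lacunary_sum. Qed.

Lemma psum_agree f g J : agree_upto J f g -> psum_of f J = psum_of g J.
Proof.
  intros Hfg. assert (Hn : forall n, (n <= J)%nat -> psum_of f n = psum_of g n).
  { induction n as [|n IH]; intros Hn; [reflexivity|]. simpl.
    rewrite IH by lia. unfold coef, digit, level. rewrite (Hfg n) by lia. reflexivity. }
  apply Hn, le_n.
Qed.

Lemma code_near_psum g J : psum_of g J <= code g <= psum_of g J + / (2 * INR (S J)).
Proof.
  split; [apply code_ge_psum|].
  pose proof (code_tail_le g J (1/4) (fun j _ => proj2 (coef_range g j))).
  assert (HJ : INR (S J) <= scale J).
  { apply le_INR. pose proof (pos_ge_index J). pose proof (a_sequence_gt_index u Ha (pos J)). lia. }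
  pose proof (pos_INR J). rewrite S_INR in *.
  assert (code g - psum_of g J <= / (2 * scale J)).
  { apply (Rmult_le_reg_l (scale J)); [lra|].
    replace (scale J * / (2 * scale J)) with (1/2) by (field; lra). lra. }
  assert (/ (2 * scale J) <= / (2 * (INR J + 1))) by (apply Rinv_le_contravar; lra).
  lra.
Qed.

Lemma codeT_prefix_continuous eps : 0 < eps ->
  exists J, forall f g, agree_upto J f g -> Tdist (codeT f) (codeT g) < eps.
Proof.
  intros Heps. destruct (archimed_cor1 eps Heps) as [J [HJ HJpos]].
  exists J. intros f g Hfg. unfold Tdist. simpl.
  eapply Rle_lt_trans; [apply tnorm_le_Rabs|].
  pose proof (psum_agree f g J Hfg).
  pose proof (code_near_psum f J). pose proof (code_near_psum g J).
  assert (/ (2 * INR (S J)) < / INR J).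
  { assert (0 < INR J) by (apply lt_0_INR; lia). rewrite S_INR.
    apply Rinv_lt_contravar; nra. }
  apply Rabs_def1; lra.
Qed.

Lemma tnorm_code_at_pos g i : coef g i <= tnorm (INR (u (pos i)) * code g).
Proof.
  assert (Hbelow : forall j, (j < i)%nat -> (S (pos j) <= pos i)%nat).
  { intros j Hj. pose proof (pos_le (S j) i Hj). pose proof (pos_lt_S j). lia. }
  destruct (psum_times_integer g _ i Hbelow) as [z Hz].
  replace (INR (u (pos i)) * code g) with (IZR z + scale i * (code g - psum_of g i))
    by (rewrite <- Hz; change (scale i) with (INR (u (pos i))); ring).
  rewrite tnorm_add_IZR, tnorm_id; [apply code_tail_ge|].
  pose proof (code_tail_ge g i). pose proof (coef_range g i).
  pose proof (code_tail_le g i (1/4) (fun j _ => proj2 (coef_range g j))). lra.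
Qed.

Lemma tnorm_code_le g n i delta :
  (forall j, (j < i)%nat -> (S (pos j) <= n)%nat) -> (n <= pos i)%nat ->
  (forall j, (i <= j)%nat -> coef g j <= delta) ->
  tnorm (INR (u n) * code g) <= 2 * delta.
Proof.
  intros Hbelow Hn Hcoef. destruct (psum_times_integer g n i Hbelow) as [z Hz].
  replace (INR (u n) * code g) with (IZR z + INR (u n) * (code g - psum_of g i))
    by (rewrite <- Hz; ring).
  rewrite tnorm_add_IZR. eapply Rle_trans; [apply tnorm_le_Rabs|].
  pose proof (code_ge_psum g i). pose proof (pos_INR (u n)).
  assert (INR (u n) <= scale i) by (apply le_INR, a_sequence_le; assumption).
  pose proof (code_tail_le g i delta Hcoef).
  rewrite Rabs_right by nra. nra.
Qed.

Lemma code_s_u_diverges g : s_u u (codeT g) -> diverges g.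
Proof.
  intros Hs M. assert (Heps : 0 < / (8 * (INR M + 1))).
  { apply Rinv_0_lt_compat. pose proof (pos_INR M). lra. }
  destruct (Hs _ Heps) as [N HN]. exists N. intros i Hi.
  specialize (HN (pos i) ltac:(pose proof (pos_ge_index i); lia)). simpl in HN.
  pose proof (tnorm_code_at_pos g i). pose proof (coef_bounds g i).
  assert (Hlev : (M <= level g i)%nat).
  { apply INR_le. destruct (Rle_lt_dec (INR M) (INR (level g i))) as [|Hlt]; [assumption|].
    assert (/ (8 * (INR M + 1)) <= / (8 * (INR (level g i) + 1)))
      by (apply Rinv_le_contravar; pose proof (pos_INR (level g i)); lra).
    lra. }
  unfold level in Hlev. lia.
Qed.

Lemma diverges_code_s_u g : diverges g -> s_u u (codeT g).
Proof.
  intros Hg eps Heps. destruct (archimed_cor1 eps Heps) as [k [Hk Hkpos]].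
  destruct (Hg k) as [N HN]. set (i0 := Nat.max N k).
  exists (S (pos i0)). intros n Hn. simpl.
  destruct (pos_bracket n) as [i [Hbelow Hni]].
  assert (Hi0 : (i0 <= i)%nat).
  { destruct (Nat.le_gt_cases i0 i) as [|Hlt]; [assumption|].
    pose proof (pos_le i i0 ltac:(lia)). lia. }
  eapply Rle_lt_trans.
  - apply (tnorm_code_le g n i (/ (4 * (INR k + 1)))); [assumption|assumption|].
    intros j Hj. apply coef_le_of_level. specialize (HN j ltac:(lia)).
    unfold level. lia.
  - assert (0 < INR k) by (apply lt_0_INR; lia).
    replace (2 * / (4 * (INR k + 1))) with (/ (2 * (INR k + 1))) by (field; lra).
    apply (Rle_lt_trans _ (/ INR k)); [apply Rinv_le_contravar; lra|assumption].
Qed.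

End Coding.

Theorem corollaryE (u : nat -> nat) :
  a_sequence u ->
  (forall M : nat, exists n : nat, (M < ratio u n)%nat) ->
  ~ T_Fsigma (s_u u).
Proof.
  intros Ha Hunb [F [HFclosed HFcover]].
  destruct (divergent_not_Fsigma (fun k g => F k (codeT u Ha Hunb g))) as [g [Hg HnotF]].
  - intros k. apply preimage_baire_closed; [apply codeT_prefix_continuous|apply HFclosed].
  - intros k g HF. apply (code_s_u_diverges u Ha Hunb), HFcover. now exists k.
  - destruct (proj1 (HFcover _) (diverges_code_s_u u Ha Hunb g Hg)) as [k Hk].
    exact (HnotF k Hk).
Qed.
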